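(* Let $\alpha\in\mathbb{R}$, $\beta\ge0$, $0<\mu\le1$, and define $g(\lambda)=\frac{(\lambda+\beta)^\mu}{(\lambda+\beta)^\mu+\alpha}$ for $\lambda\in\mathbb{C}$ with $\operatorname{Re}(\lambda)>0$. Then: (a) if $\alpha\ge 0$, then $|g(\lambda)|\le 1$ for all $\operatorname{Re}(\lambda)>0$; (b) if $\alpha<0$ and $\alpha+\beta^\mu\ge|\alpha|$, then $|g(\lambda)|\le\frac{\beta^\mu}{\alpha+\beta^\mu}\le\frac{\beta^\mu}{|\alpha|}$ for all $\operatorname{Re}(\lambda)>0$.
   Context: Complex powers $z^\mu$ are taken with the principal branch of the argument. *)

From Stdlib Require Import Reals.
From Coquelicot Require Import Coquelicot.
Open Scope R_scope.

(* Principal argument of z, with values in (-PI, PI]; Carg 0 = 0.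
   For z not on the closed negative real half-line,
   Arg z = 2 atan (Im z / (|z| + Re z)); on the negative real axis Arg = PI. *)
Definition Carg (z : C) : R :=
  if Req_EM_T (Im z) 0 then (if Rlt_dec (Re z) 0 then PI else 0)
  else 2 * atan (Im z / (Cmod z + Re z)).

(* Principal complex power z^mu = exp(mu * Log z), with 0^mu = 0 (mu > 0). *)
Definition Cpow (z : C) (mu : R) : C :=
  if Ceq_dec z 0%C then 0%C
  else RtoC (Rpower (Cmod z) mu) * (cos (mu * Carg z), sin (mu * Carg z)).

(* Real power of a nonnegative real, with 0^mu = 0 (Stdlib's Rpower 0 mu = 1). *)
Definition rpow (b mu : R) : R := if Req_EM_T b 0 then 0 else Rpower b mu.

Definition g (alpha beta mu : R) (l : C) : C :=
  (Cpow (l + RtoC beta) mu / (Cpow (l + RtoC beta) mu + RtoC alpha))%C.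

(* Put w = (lambda + beta)^mu.  Since Re (lambda + beta) > 0 and mu <= 1, the
   principal argument of w lies in [-pi/2, pi/2], so Re w >= 0; and
   |w| = |lambda + beta|^mu >= beta^mu.  For alpha >= 0 the first fact gives
   |w| <= |w + alpha|.  For alpha < 0 the triangle inequality gives
   |w + alpha| >= |w| + alpha, and r / (r + alpha) decreases in r > -alpha,
   so |g| <= beta^mu / (beta^mu + alpha). *)

From Pilot Require Import Defs.
From Stdlib Require Import Reals Lra Psatz.
From Coquelicot Require Import Coquelicot.
Open Scope R_scope.

Lemma Cinv_0 : (/ 0)%C = 0%C.
Proof.
  unfold Cinv; simpl.
  apply injective_projections; simpl; unfold Rdiv; ring.
Qed.

(* Unlike [Cmod_div], no hypothesis is needed: [x / 0 = 0] in Coquelicot. *)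
Lemma Cmod_div_any (x y : C) : Cmod (x / y) = Cmod x / Cmod y.
Proof.
  destruct (Ceq_dec y 0) as [-> | Hy].
  - unfold Cdiv. rewrite Cinv_0, Cmult_0_r, Cmod_0.
    unfold Rdiv. rewrite Rinv_0. ring.
  - now apply Cmod_div.
Qed.

Lemma Rabs_Im_le_Cmod (z : C) : Rabs (Im z) <= Cmod z.
Proof.
  pose proof (Cmod2_alt z). pose proof (Cmod_ge_0 z).
  rewrite <- (Rabs_pos_eq (Cmod z)) by lra.
  apply Rsqr_le_abs_0. unfold Rsqr. nra.
Qed.

Lemma Rabs_atan_lt (q : R) : Rabs q < 1 -> Rabs (atan q) < PI / 4.
Proof.
  intros Hq. apply Rabs_def2 in Hq as [Hq1 Hq2].
  pose proof (atan_increasing q 1 Hq1).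
  pose proof (atan_increasing (- (1)) q Hq2).
  rewrite atan_opp, atan_1 in *.
  apply Rabs_def1; lra.
Qed.

Lemma Carg_bound (z : C) : 0 < Re z -> Rabs (Carg z) <= PI / 2.
Proof.
  intros Hz. pose proof PI_RGT_0. unfold Carg.
  destruct (Req_EM_T (Im z) 0).
  - destruct (Rlt_dec (Re z) 0); [lra|].
    rewrite Rabs_R0. lra.
  - pose proof (Rabs_Im_le_Cmod z) as HIm.
    pose proof (Rabs_pos (Im z)).
    assert (Hq : Rabs (Im z / (Cmod z + Re z)) < 1).
    { unfold Rdiv. rewrite Rabs_mult, Rabs_inv, (Rabs_pos_eq (Cmod z + Re z)) by lra.
      apply Rlt_div_l; lra. }
    pose proof (Rabs_atan_lt _ Hq).
    rewrite Rabs_mult, Rabs_pos_eq by lra. lra.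
Qed.

Lemma Cmod_Cpow (z : C) (mu : R) :
  z <> 0%C -> Cmod (Defs.Cpow z mu) = Rpower (Cmod z) mu.
Proof.
  intros Hz. unfold Defs.Cpow. destruct (Ceq_dec z 0); [contradiction|].
  rewrite Cmod_mult, Cmod_R, Rabs_pos_eq by (left; apply exp_pos).
  assert (Hunit : Cmod (cos (mu * Carg z), sin (mu * Carg z)) = 1).
  { unfold Cmod; simpl. rewrite !Rmult_1_r.
    rewrite <- sqrt_1. f_equal.
    pose proof (sin2_cos2 (mu * Carg z)). unfold Rsqr in *. lra. }
  rewrite Hunit. ring.
Qed.

Lemma Re_Cpow_nonneg (z : C) (mu : R) :
  0 < Re z -> 0 <= mu <= 1 -> 0 <= Re (Defs.Cpow z mu).
Proof.
  intros Hz Hmu. unfold Defs.Cpow. destruct (Ceq_dec z 0); [simpl; lra|].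
  simpl. rewrite Rmult_0_l, Rminus_0_r.
  apply Rmult_le_pos; [left; apply exp_pos|].
  pose proof (Carg_bound z Hz) as Harg. apply Rabs_le_between in Harg.
  pose proof PI_RGT_0.
  apply cos_ge_0; nra.
Qed.

Lemma rpow_le_Cmod_Cpow_shift (beta mu : R) (l : C) :
  0 <= beta -> 0 <= mu -> 0 < Re l ->
  rpow beta mu <= Cmod (Defs.Cpow (l + RtoC beta) mu).
Proof.
  intros Hb Hmu Hl. unfold rpow.
  destruct (Req_EM_T beta 0); [apply Cmod_ge_0|].
  set (z := (l + RtoC beta)%C).
  assert (Hz : beta < Re z) by (unfold z, Re in *; simpl; lra).
  assert (Hz0 : z <> 0%C) by (intros E; rewrite E in Hz; simpl in Hz; lra).
  pose proof (Rle_abs (Re z)). pose proof (re_le_Cmod z).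
  rewrite Cmod_Cpow by exact Hz0.
  apply Rle_Rpower_l; lra.
Qed.

Lemma Cmod_le_Cmod_add_nonneg (w : C) (a : R) :
  0 <= Re w -> 0 <= a -> Cmod w <= Cmod (w + RtoC a).
Proof.
  intros Hw Ha.
  pose proof (Cmod2_alt w) as Hw2. pose proof (Cmod2_alt (w + RtoC a)) as Hwa2.
  simpl in Hwa2. change (fst w) with (Re w) in Hwa2. change (snd w) with (Im w) in Hwa2.
  pose proof (Cmod_ge_0 (w + RtoC a)).
  apply Rsqr_incr_0_var; [unfold Rsqr; nra | lra].
Qed.

Lemma Cmod_div_add_nonneg_le_1 (w : C) (a : R) :
  0 <= Re w -> 0 <= a -> Cmod (w / (w + RtoC a)) <= 1.
Proof.
  intros Hw Ha. rewrite Cmod_div_any.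
  pose proof (Cmod_le_Cmod_add_nonneg w a Hw Ha).
  destruct (Req_dec (Cmod (w + RtoC a)) 0) as [E | Hne].
  - rewrite E. unfold Rdiv. rewrite Rinv_0. lra.
  - apply Rle_div_l; [pose proof (Cmod_ge_0 (w + RtoC a)); lra | lra].
Qed.

Lemma Cmod_div_add_neg_le (w : C) (alpha b : R) :
  alpha < 0 -> - alpha < b -> b <= Cmod w ->
  Cmod (w / (w + RtoC alpha)) <= b / (alpha + b).
Proof.
  intros Ha Hab Hbw. rewrite Cmod_div_any.
  assert (Htri : Cmod w + alpha <= Cmod (w + RtoC alpha)).
  { pose proof (Cmod_triangle (w + RtoC alpha) (- RtoC alpha)) as T.
    replace (w + RtoC alpha + - RtoC alpha)%C with w in T by ring.
    rewrite Cmod_opp, Cmod_R, Rabs_left in T by lra. lra. }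
  apply Rle_div_l; [lra|].
  replace (b / (alpha + b) * Cmod (w + RtoC alpha))
    with (b * Cmod (w + RtoC alpha) / (alpha + b)) by (field; lra).
  apply Rle_div_r; [lra|].
  nra.
Qed.

Theorem lemma3p2 (alpha beta mu : R) :
  0 <= beta -> 0 < mu <= 1 ->
  (0 <= alpha -> forall l : C, 0 < Re l -> Cmod (g alpha beta mu l) <= 1) /\
  (alpha < 0 -> alpha + rpow beta mu >= Rabs alpha ->
     forall l : C, 0 < Re l ->
       Cmod (g alpha beta mu l) <= rpow beta mu / (alpha + rpow beta mu) /\
       rpow beta mu / (alpha + rpow beta mu) <= rpow beta mu / Rabs alpha).
Proof.
  intros Hbeta Hmu. unfold g. split.
  - intros Ha l Hl.
    apply Cmod_div_add_nonneg_le_1; [|exact Ha].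
    apply Re_Cpow_nonneg; [simpl; unfold Re in *; lra | lra].
  - intros Ha Hab l Hl.
    rewrite Rabs_left in * by exact Ha.
    split.
    + apply Cmod_div_add_neg_le; [exact Ha | lra |].
      apply rpow_le_Cmod_Cpow_shift; lra.
    + apply Rmult_le_compat_l; [lra|].
      apply Rinv_le_contravar; lra.
Qed.
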